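(* For each $C>0$ and $K>1$ there exist $D=D(K,C)>C$ and $L=L(K,C)>C$ with the following property. Let $J\subseteq\mathbb Z$ be a nonempty set of consecutive integers, $p\in X$, and for each $i\in J$ let $\kappa_i$ be a $K$-contracting axis from $x_i$ to $y_i$ whose domain has length greater than $L$. Suppose $(\kappa_i)_{i\in J}$ is $C$-aligned. Then: (1) for each $i\in J$, the statements ''$(\kappa_i,p)$ is $D$-aligned'' and ''$(p,\kappa_i)$ is $D$-aligned'' cannot hold simultaneously; (2) the set $J_0=\{j\in J:(\kappa_i,p)\text{ is }D\text{-aligned for all }i\in J,\ i<j,\text{ and }(p,\kappa_i)\text{ is }D\text{-aligned for all }i\in J,\ i>j\}$ consists of either a single integer or two consecutive integers; (3) $\pi_{\bigcup_i\kappa_i}(p)$ is nonempty and contained in $\bigcup_{j\in J_0}\pi_{\kappa_j}(p)$; (4) $(\kappa_l,\kappa_m)$ is $D$-aligned for all $l,m\in J$ with $l<m$.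
   Context: $X$ is a geodesic metric space. For $A\subseteq X$, $\pi_A(z)=\{a\in A:d(z,a)=d(z,A)\}$ and $\pi_A(B)=\bigcup_{b\in B}\pi_A(b)$. $A$ is $K$-contracting if $\pi_A(z)\ne\emptyset$ for all $z$ and $d(x,y)\le d(x,A)-K$ implies $\operatorname{diam}(\pi_A(x)\cup\pi_A(y))\le K$. A $K$-quasigeodesic is a map $\gamma$ from an interval of $\mathbb R$ or a set of consecutive integers to $X$ with $|s-t|/K-K\le d(\gamma(s),\gamma(t))\le K|s-t|+K$; a $K$-contracting axis is a $K$-quasigeodesic with $K$-contracting image; projections onto a path mean onto its image. Alignment: for paths $\kappa$ from $a$ to $a'$ and $\eta$ from $b'$ to $b$, $(\kappa,\eta)$ is $C$-aligned if $\operatorname{diam}(a'\cup\pi_\kappa(\eta))<C$ and $\operatorname{diam}(b'\cup\pi_\eta(\kappa))<C$. A sequence $(\kappa_i)_{i\in J}$ of paths is $C$-aligned if $(\kappa_i,\kappa_{i+1})$ is $C$-aligned whenever $i,i+1\in J$. A point is treated as a degenerate path with both endpoints equal to itself; thus $(\kappa,p)$ is $D$-aligned iff $\operatorname{diam}(a'\cup\pi_\kappa(p))<D$ where $a'$ is the terminal point of $\kappa$, and $(p,\kappa)$ is $D$-aligned iff $\operatorname{diam}(a\cup\pi_\kappa(p))<D$ where $a$ is the initial point of $\kappa$. *)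

From Stdlib Require Import Reals ZArith.
From Coquelicot Require Import Coquelicot.
Open Scope R_scope.

Set Implicit Arguments.

Section Geo.
Variable X : Type.
Variable d : X -> X -> R.

Definition is_metric : Prop :=
  (forall x, d x x = 0) /\ (forall x y, d x y = 0 -> x = y) /\
  (forall x y, d x y = d y x) /\ (forall x y z, d x z <= d x y + d y z).

Definition is_geodesic : Prop :=
  forall x y, exists g : R -> X, g 0 = x /\ g (d x y) = y /\
    forall s t, 0 <= s <= d x y -> 0 <= t <= d x y -> d (g s) (g t) = Rabs (s - t).

Definition dist_set (A : X -> Prop) (z : X) : R :=
  real (Glb_Rbar (fun r => exists a, A a /\ r = d z a)).

Definition diam (S : X -> Prop) : Rbar :=
  Lub_Rbar (fun r => exists u v, S u /\ S v /\ r = d u v).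

Definition proj (A : X -> Prop) (z : X) : X -> Prop :=
  fun a => A a /\ d z a = dist_set A z.

Definition proj_set (A B : X -> Prop) : X -> Prop :=
  fun a => exists b, B b /\ proj A b a.

Definition setU (A B : X -> Prop) : X -> Prop := fun z => A z \/ B z.
Definition set1 (x : X) : X -> Prop := fun z => z = x.

Definition contracting (K : R) (A : X -> Prop) : Prop :=
  (forall z, exists a, proj A z a) /\
  forall x y, d x y <= dist_set A x - K ->
    Rbar_le (diam (setU (proj A x) (proj A y))) (Finite K).

(** Paths: a map defined on a compact domain [p_a, p_b], which is either a real
    interval (p_disc = false) or the set of integers in [p_a, p_b]
    (p_disc = true, with p_a, p_b integers). *)
Record path := mkPath { p_disc : bool; p_a : R; p_b : R; p_f : R -> X }.

Definition pdom (k : path) (t : R) : Prop :=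
  p_a k <= t <= p_b k /\ (p_disc k = true -> exists n : Z, t = IZR n).

Definition wf_path (k : path) : Prop :=
  p_a k <= p_b k /\
  (p_disc k = true -> (exists n : Z, p_a k = IZR n) /\ (exists n : Z, p_b k = IZR n)).

Definition image (k : path) : X -> Prop := fun z => exists t, pdom k t /\ z = p_f k t.
Definition init (k : path) : X := p_f k (p_a k).
Definition term (k : path) : X := p_f k (p_b k).
Definition dom_length (k : path) : R := p_b k - p_a k.

Definition quasigeodesic (K : R) (k : path) : Prop :=
  forall s t, pdom k s -> pdom k t ->
    Rabs (s - t) / K - K <= d (p_f k s) (p_f k t) <= K * Rabs (s - t) + K.

Definition contracting_axis (K : R) (k : path) (x y : X) : Prop :=
  wf_path k /\ init k = x /\ term k = y /\ quasigeodesic K k /\ contracting K (image k).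

Definition aligned (C : R) (k e : path) : Prop :=
  Rbar_lt (diam (setU (set1 (term k)) (proj_set (image k) (image e)))) (Finite C) /\
  Rbar_lt (diam (setU (set1 (init e)) (proj_set (image e) (image k)))) (Finite C).

Definition aligned_path_pt (D : R) (k : path) (p : X) : Prop :=
  Rbar_lt (diam (setU (set1 (term k)) (proj (image k) p))) (Finite D).
Definition aligned_pt_path (D : R) (p : X) (k : path) : Prop :=
  Rbar_lt (diam (setU (set1 (init k)) (proj (image k) p))) (Finite D).

End Geo.

Definition consecutive_Z (J : Z -> Prop) : Prop :=
  (exists i, J i) /\ forall i j k, J i -> J k -> (i <= j <= k)%Z -> J j.

From Stdlib Require Import Reals ZArith Lra Lia List Classical.
Import ListNotations.
From Coquelicot Require Import Coquelicot.
Open Scope R_scope.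

(** The projections of [p] to the axes switch from the terminal end to the initial end:
    alignment forces the projection to [kappa_(i+1)] to be near its initial point as soon as
    the projection to [kappa_i] is far from its terminal point, and long axes cannot have the
    projection near both ends.  So "near the terminal point" propagates downwards and "near
    the initial point" upwards, and the switching indices [J0] form one or two consecutive
    integers.  Away from the switch, the bounded geodesic image property of contracting sets
    makes [d(p, kappa_i)] drop by [C] at every step towards it; since distances are
    nonnegative this gives the existence of a switching index, and it places the nearest axes
    at the switch, which is (3).  Applying the propagation to points of [kappa_m] gives (4). *)

Lemma Z_up_ind (P : Z -> Prop) (i0 : Z) :
  P i0 -> (forall i, (i0 <= i)%Z -> P i -> P (i + 1)%Z) ->
  forall i, (i0 <= i)%Z -> P i.
Proof. intros H0 HS. apply Z.right_induction; auto. intros x y ->; reflexivity. Qed.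

Lemma Z_down_ind (P : Z -> Prop) (k : Z) :
  P k -> (forall i, (i < k)%Z -> P (i + 1)%Z -> P i) ->
  forall i, (i <= k)%Z -> P i.
Proof. intros H0 HS. apply Z.left_induction; auto. intros x y ->; reflexivity. Qed.

Lemma no_infinite_descent (g : Z -> R) (C : R) (i0 : Z) : 0 < C ->
  (forall i, (i0 <= i)%Z -> 0 <= g i) ->
  (forall i, (i0 <= i)%Z -> g (i + 1)%Z + C <= g i) -> False.
Proof.
  intros HC Hpos Hstep.
  assert (Hlin : forall i, (i0 <= i)%Z -> g i + IZR (i - i0) * C <= g i0).
  { apply Z_up_ind.
    - rewrite Z.sub_diag. lra.
    - intros i Hi IH. specialize (Hstep i Hi).
      replace (i + 1 - i0)%Z with (i - i0 + 1)%Z by lia. rewrite plus_IZR. lra. }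
  destruct (archimed (g i0 / C)) as [Hup _].
  set (n := up (g i0 / C)) in *.
  assert (Hg0 : 0 <= g i0 / C) by (apply Rdiv_le_0_compat; [apply Hpos; lia | lra]).
  assert (Hn : (0 < n)%Z) by (apply lt_IZR; lra).
  assert (Hgn : g i0 < IZR n * C).
  { apply (Rmult_lt_compat_r C) in Hup; [|lra].
    unfold Rdiv in Hup. rewrite Rmult_assoc, Rinv_l in Hup; lra. }
  specialize (Hlin (i0 + n)%Z ltac:(lia)). specialize (Hpos (i0 + n)%Z ltac:(lia)).
  replace (i0 + n - i0)%Z with n in Hlin by lia. lra.
Qed.

Lemma exists_min_in_list {A : Type} (P : A -> Prop) (g : A -> R) (l : list A) :
  (exists m, In m l /\ P m) ->
  exists m, P m /\ In m l /\ forall n, In n l -> P n -> g m <= g n.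
Proof.
  induction l as [|x l IH]; intros [m0 [Hm0 HPm0]]; [destruct Hm0|].
  destruct (classic (exists m, In m l /\ P m)) as [Hl|Hl].
  - destruct (IH Hl) as (m & HPm & Hml & Hmin).
    destruct (classic (P x /\ g x <= g m)) as [[HPx Hx]|Hx].
    + exists x. split; [auto|split; [left; auto|]].
      intros n [<-|Hn] HPn; [lra|]. specialize (Hmin n Hn HPn). lra.
    + exists m. split; [auto|split; [right; auto|]].
      intros n [<-|Hn] HPn; auto.
      apply Rlt_le, Rnot_le_lt. intros Hxm. apply Hx. auto.
  - destruct Hm0 as [<-|Hm0]; [|exfalso; apply Hl; eauto].
    exists x. split; [auto|split; [left; auto|]].
    intros n [<-|Hn] HPn; [lra|]. exfalso; apply Hl; eauto.
Qed.

Definition separating_index (J a b : Z -> Prop) (j : Z) : Prop :=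
  J j /\ (forall i, J i -> (i < j)%Z -> a i) /\ (forall i, J i -> (j < i)%Z -> b i).

Section Switching.
Context {J a b : Z -> Prop}.
Hypothesis HJ : consecutive_Z J.
Hypothesis Hexcl : forall i, J i -> ~ (a i /\ b i).
Hypothesis Hswitch : forall i, J i -> J (i + 1)%Z -> a i \/ b (i + 1)%Z.

Lemma consecutive_between i j k : J i -> J k -> (i <= j <= k)%Z -> J j.
Proof. apply HJ. Qed.

Lemma a_down_closed k : J k -> a k -> forall i, (i <= k)%Z -> J i -> a i.
Proof.
  intros Hk Hak. apply (Z_down_ind (fun i => J i -> a i)); [auto|].
  intros i Hik IH Hi.
  assert (Hi1 : J (i + 1)%Z) by (apply (consecutive_between i _ k); auto; lia).
  destruct (Hswitch i Hi Hi1) as [H|H]; [auto|].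
  exfalso. apply (Hexcl _ Hi1). auto.
Qed.

Lemma b_up_closed i : J i -> b i -> forall k, (i <= k)%Z -> J k -> b k.
Proof.
  intros Hi Hbi. apply (Z_up_ind (fun k => J k -> b k)); [auto|].
  intros k Hik IH Hk1.
  assert (Hk : J k) by (apply (consecutive_between i _ (k + 1)); auto; lia).
  destruct (Hswitch k Hk Hk1) as [H|H]; [|auto].
  exfalso. apply (Hexcl _ Hk). auto.
Qed.

Lemma separating_index_of_neighbours j : J j ->
  (J (j - 1)%Z -> a (j - 1)%Z) -> (J (j + 1)%Z -> b (j + 1)%Z) -> separating_index J a b j.
Proof.
  intros Hj Hprev Hnext. split; [auto|split].
  - intros i Hi Hij.
    assert (Hj1 : J (j - 1)%Z) by (apply (consecutive_between i _ j); auto; lia).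
    apply (a_down_closed (j - 1)); auto; lia.
  - intros i Hi Hji.
    assert (Hj1 : J (j + 1)%Z) by (apply (consecutive_between j _ i); auto; lia).
    apply (b_up_closed (j + 1)); auto; lia.
Qed.

Lemma separating_index_of_not_a j : J j -> ~ a j ->
  (J (j - 1)%Z -> a (j - 1)%Z) -> separating_index J a b j.
Proof.
  intros Hj Haj Hprev. apply separating_index_of_neighbours; auto.
  intros Hj1. destruct (Hswitch j Hj Hj1); [contradiction|auto].
Qed.

Lemma separating_index_gap j k :
  separating_index J a b j -> separating_index J a b k -> (j < k)%Z -> k = (j + 1)%Z.
Proof.
  intros (Hj & _ & Hbj) (Hk & Hak & _) Hjk.
  apply Z.le_antisymm; [|lia]. apply Z.nlt_ge. intros Hlt.
  assert (Hj1 : J (j + 1)%Z) by (apply (consecutive_between j _ k); auto; lia).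
  apply (Hexcl _ Hj1). split; [apply Hak | apply Hbj]; auto; lia.
Qed.

Lemma separating_index_shape : (exists j, separating_index J a b j) ->
  (exists j, forall k, separating_index J a b k <-> k = j) \/
  (exists j, forall k, separating_index J a b k <-> (k = j \/ k = (j + 1)%Z)).
Proof.
  intros [j Hj].
  assert (Hnear : forall k, separating_index J a b k -> (j - 1 <= k <= j + 1)%Z).
  { intros k Hk. destruct (Z.lt_trichotomy j k) as [H|[H|H]].
    - pose proof (separating_index_gap j k Hj Hk H). lia.
    - lia.
    - pose proof (separating_index_gap k j Hk Hj H). lia. }
  destruct (classic (separating_index J a b (j + 1)%Z)) as [Hs|Hs];
    [|destruct (classic (separating_index J a b (j - 1)%Z)) as [Hp|Hp]].
  - right. exists j. intros k. split; [|intros [->| ->]; auto].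
    intros Hk. specialize (Hnear k Hk).
    assert (k <> (j - 1)%Z)
      by (intros ->; pose proof (separating_index_gap _ _ Hk Hs ltac:(lia)); lia).
    lia.
  - right. exists (j - 1)%Z. intros k. split.
    + intros Hk. specialize (Hnear k Hk).
      assert (k <> (j + 1)%Z) by (intros ->; contradiction). lia.
    + intros [->| ->]; [auto|]. replace (j - 1 + 1)%Z with j by lia. auto.
  - left. exists j. intros k. split; [|intros ->; auto].
    intros Hk. specialize (Hnear k Hk).
    assert (k <> (j + 1)%Z) by (intros ->; contradiction).
    assert (k <> (j - 1)%Z) by (intros ->; contradiction). lia.
Qed.

Section Descent.
Context {f : Z -> R} {C : R}.
Hypothesis HC : 0 < C.
Hypothesis Hf : forall i, J i -> 0 <= f i.
Hypothesis Hdecr : forall i, J i -> J (i + 1)%Z -> ~ b (i + 1)%Z -> f (i + 1)%Z + C <= f i.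
Hypothesis Hincr : forall i, J i -> J (i + 1)%Z -> ~ a i -> f i + C <= f (i + 1)%Z.

Lemma f_le_below_a k : J k -> a k -> forall i, (i <= k)%Z -> J i -> f k <= f i.
Proof.
  intros Hk Hak. apply (Z_down_ind (fun i => J i -> f k <= f i)); [intros; lra|].
  intros i Hik IH Hi.
  assert (Hi1 : J (i + 1)%Z) by (apply (consecutive_between i _ k); auto; lia).
  assert (Hai1 : a (i + 1)%Z) by (apply (a_down_closed k); auto; lia).
  assert (Hstep : f (i + 1)%Z + C <= f i) by (apply Hdecr; auto; intros Hb; apply (Hexcl _ Hi1); auto).
  specialize (IH Hi1). lra.
Qed.

Lemma f_le_above_b i : J i -> b i -> forall k, (i <= k)%Z -> J k -> f i <= f k.
Proof.
  intros Hi Hbi. apply (Z_up_ind (fun k => J k -> f i <= f k)); [intros; lra|].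
  intros k Hik IH Hk1.
  assert (Hk : J k) by (apply (consecutive_between i _ (k + 1)); auto; lia).
  assert (Hbk : b k) by (apply (b_up_closed i); auto).
  assert (Hstep : f k + C <= f (k + 1)%Z) by (apply Hincr; auto; intros Ha; apply (Hexcl _ Hk); auto).
  specialize (IH Hk). lra.
Qed.

Lemma separating_index_exists : exists j, separating_index J a b j.
Proof.
  apply NNPP. intros Hnone. destruct HJ as [[i0 Hi0] _].
  destruct (classic (a i0)) as [Ha0|Ha0].
  - assert (Hchain : forall i, (i0 <= i)%Z -> J i /\ a i).
    { apply Z_up_ind; [auto|]. intros i Hi [HJi Hai].
      assert (HJi1 : J (i + 1)%Z).
      { apply NNPP. intros HJi1. apply Hnone. exists i.
        apply separating_index_of_neighbours; [auto| |contradiction].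
        intros HJp. apply (a_down_closed i); auto; lia. }
      split; [auto|]. apply NNPP. intros Hai1. apply Hnone. exists (i + 1)%Z.
      apply separating_index_of_not_a; auto. replace (i + 1 - 1)%Z with i by lia. auto. }
    apply (no_infinite_descent f C i0 HC).
    + intros i Hi. apply Hf, Hchain, Hi.
    + intros i Hi. destruct (Hchain i Hi), (Hchain (i + 1)%Z ltac:(lia)).
      apply Hdecr; auto. intros Hb. apply (Hexcl (i + 1)%Z); auto.
  - assert (Hchain : forall i, (i <= i0)%Z -> J i /\ ~ a i).
    { apply Z_down_ind; [auto|]. intros i Hi [HJi1 Hai1].
      assert (Hsep : ~ (J i -> a i)).
      { intros Hprev. apply Hnone. exists (i + 1)%Z.
        apply separating_index_of_not_a; auto. replace (i + 1 - 1)%Z with i by lia. auto. }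
      apply imply_to_and in Hsep. auto. }
    apply (no_infinite_descent (fun i => f (- i)%Z) C (- i0)%Z HC).
    + intros i Hi. apply Hf, Hchain. lia.
    + intros i Hi. destruct (Hchain (- i)%Z ltac:(lia)), (Hchain (- (i + 1))%Z ltac:(lia)).
      pose proof (Hincr (- (i + 1))%Z) as Hstep.
      replace (- (i + 1) + 1)%Z with (- i)%Z in Hstep by lia. auto.
Qed.

Lemma separating_index_of_minimum m : J m -> (forall i, J i -> f m <= f i) ->
  separating_index J a b m.
Proof.
  intros Hm Hmin. apply separating_index_of_neighbours; [auto| |].
  - intros Hm1. apply NNPP. intros Ha.
    pose proof (Hincr (m - 1)%Z Hm1) as Hstep. replace (m - 1 + 1)%Z with m in Hstep by lia.
    specialize (Hstep Hm Ha). specialize (Hmin _ Hm1). lra.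
  - intros Hm1. apply NNPP. intros Hb.
    pose proof (Hdecr m Hm Hm1 Hb). specialize (Hmin _ Hm1). lra.
Qed.

Lemma minimum_exists : exists m, J m /\ forall i, J i -> f m <= f i.
Proof.
  destruct separating_index_exists as [j (Hj & Ha & Hb)].
  destruct (exists_min_in_list J f [(j - 1)%Z; j; (j + 1)%Z]) as (m & Hm & Hml & Hmin).
  { exists j. simpl. auto. }
  exists m. split; [auto|]. intros i Hi.
  destruct (Z.lt_trichotomy i j) as [Hij|[->|Hji]].
  - assert (Hj1 : J (j - 1)%Z) by (apply (consecutive_between i _ j); auto; lia).
    pose proof (f_le_below_a (j - 1)%Z Hj1 (Ha _ Hj1 ltac:(lia)) i ltac:(lia) Hi).
    specialize (Hmin (j - 1)%Z ltac:(simpl; auto) Hj1). lra.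
  - apply Hmin; simpl; auto.
  - assert (Hj1 : J (j + 1)%Z) by (apply (consecutive_between j _ i); auto; lia).
    pose proof (f_le_above_b (j + 1)%Z Hj1 (Hb _ Hj1 ltac:(lia)) i ltac:(lia) Hi).
    specialize (Hmin (j + 1)%Z ltac:(simpl; auto) Hj1). lra.
Qed.

End Descent.
End Switching.

Section Geodesic.
Context {X : Type} (d : X -> X -> R).
Hypothesis Hmet : is_metric d.
Hypothesis Hgeo : is_geodesic d.

Lemma dist_self x : d x x = 0. Proof. apply Hmet. Qed.
Lemma dist_sym x y : d x y = d y x. Proof. apply Hmet. Qed.
Lemma dist_triangle x y z : d x z <= d x y + d y z. Proof. apply Hmet. Qed.

Lemma dist_nonneg x y : 0 <= d x y.
Proof.
  pose proof (dist_triangle x y x) as H. rewrite dist_self, (dist_sym y x) in H. lra.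
Qed.

Lemma diam_ge_dist (S : X -> Prop) u v : S u -> S v -> Rbar_le (d u v) (diam d S).
Proof.
  intros Hu Hv. apply (Lub_Rbar_correct (fun r => exists u v, S u /\ S v /\ r = d u v)).
  eauto.
Qed.

Lemma dist_le_of_diam_le (S : X -> Prop) (c : R) u v :
  Rbar_le (diam d S) c -> S u -> S v -> d u v <= c.
Proof.
  intros H Hu Hv. exact (Rbar_le_trans (d u v) _ c (diam_ge_dist S u v Hu Hv) H).
Qed.

Lemma dist_lt_of_diam_lt (S : X -> Prop) (c : R) u v :
  Rbar_lt (diam d S) c -> S u -> S v -> d u v < c.
Proof.
  intros H Hu Hv. exact (Rbar_le_lt_trans (d u v) _ c (diam_ge_dist S u v Hu Hv) H).
Qed.

Lemma diam_le_of_dist_le (S : X -> Prop) (c : R) :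
  (forall u v, S u -> S v -> d u v <= c) -> Rbar_le (diam d S) c.
Proof.
  intros H. apply (Lub_Rbar_correct (fun r => exists u v, S u /\ S v /\ r = d u v)).
  intros r (u & v & Hu & Hv & ->). apply H; auto.
Qed.

Lemma pointed_diam_lt (S : X -> Prop) t r (c : R) : 0 <= r -> 2 * r < c ->
  (forall u, S u -> d u t <= r) -> Rbar_lt (diam d (setU (set1 t) S)) c.
Proof.
  intros Hr Hc H. apply (Rbar_le_lt_trans _ (2 * r)); [|exact Hc].
  apply diam_le_of_dist_le. unfold setU, set1.
  intros u v [->|Hu] [->|Hv].
  - rewrite dist_self. lra.
  - rewrite dist_sym. specialize (H v Hv). lra.
  - specialize (H u Hu). lra.
  - pose proof (dist_triangle u t v). rewrite (dist_sym t v) in *.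
    pose proof (H u Hu). pose proof (H v Hv). lra.
Qed.

Lemma dist_lt_of_pointed_diam_lt (S : X -> Prop) t (c : R) u :
  Rbar_lt (diam d (setU (set1 t) S)) c -> S u -> d u t < c.
Proof.
  intros H Hu. apply (dist_lt_of_diam_lt _ c u t H); [right | left]; auto. reflexivity.
Qed.

Lemma proj_mem A z a : proj d A z a -> A a.
Proof. intros [H _]. exact H. Qed.

Lemma proj_dist A z a : proj d A z a -> d z a = dist_set d A z.
Proof. intros [_ H]. exact H. Qed.

Lemma dist_set_le A z a : A a -> dist_set d A z <= d z a.
Proof.
  intros Ha. unfold dist_set.
  destruct (Glb_Rbar_correct (fun r => exists a, A a /\ r = d z a)) as [H _].
  specialize (H (d z a) (ex_intro _ a (conj Ha eq_refl))).
  destruct (Glb_Rbar _); simpl in *; [auto | contradiction | apply dist_nonneg].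
Qed.

Lemma proj_iff A z a : proj d A z a <-> A a /\ forall a', A a' -> d z a <= d z a'.
Proof.
  split.
  - intros [Ha Hd]. split; [auto|]. intros a' Ha'. rewrite Hd. apply dist_set_le; auto.
  - intros [Ha Hmin]. split; [auto|]. unfold dist_set.
    rewrite (is_glb_Rbar_unique _ (d z a)); [reflexivity|]. split.
    + intros r (a' & Ha' & ->). apply Hmin; auto.
    + intros b Hb. apply Hb. eauto.
Qed.

Lemma proj_union_of_min {I : Type} (J : I -> Prop) (A : I -> X -> Prop) z m a :
  J m -> proj d (A m) z a -> (forall i, J i -> dist_set d (A m) z <= dist_set d (A i) z) ->
  proj d (fun w => exists i, J i /\ A i w) z a.
Proof.
  intros Hm Ha Hmin. apply proj_iff. split; [exists m; split; [auto | apply (proj_mem _ _ _ Ha)]|].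
  intros a' (i & Hi & Ha'). rewrite (proj_dist _ _ _ Ha).
  apply (Rle_trans _ _ _ (Hmin i Hi)). apply dist_set_le; auto.
Qed.

Lemma proj_union_inv {I : Type} (J : I -> Prop) (A : I -> X -> Prop) z a :
  (forall i, J i -> exists w, proj d (A i) z w) ->
  proj d (fun w => exists i, J i /\ A i w) z a ->
  exists i, J i /\ proj d (A i) z a /\
    forall k, J k -> dist_set d (A i) z <= dist_set d (A k) z.
Proof.
  intros Hex Ha. apply proj_iff in Ha as [(i & Hi & Hai) Hmin].
  assert (Hproj : proj d (A i) z a).
  { apply proj_iff. split; [auto|]. intros a' Ha'. apply Hmin. eauto. }
  exists i. split; [auto|split; [auto|]]. intros k Hk. destruct (Hex k Hk) as [w Hw].
  rewrite <- (proj_dist _ _ _ Hproj), <- (proj_dist _ _ _ Hw).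
  apply Hmin. exists k. split; [auto | apply (proj_mem _ _ _ Hw)].
Qed.

Lemma geodesic_point x y s : 0 <= s <= d x y -> exists z, d x z = s /\ d z y = d x y - s.
Proof.
  intros Hs. destruct (Hgeo x y) as (g & Hg0 & Hg1 & Hg).
  exists (g s). rewrite <- Hg0 at 1. rewrite <- Hg1 at 1.
  rewrite !Hg by lra. split; [rewrite Rabs_left1 | rewrite Rabs_left1]; lra.
Qed.

Lemma geodesic_points2 x y s t : 0 <= s -> s <= t -> t <= d x y ->
  exists z1 z2, d x z1 = s /\ d z1 z2 = t - s /\ d z2 y = d x y - t.
Proof.
  intros Hs Hst Ht. destruct (geodesic_point x y s) as (z1 & Hxz1 & Hz1y); [lra|].
  destruct (geodesic_point z1 y (t - s)) as (z2 & Hz12 & Hz2y); [lra|].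
  exists z1, z2. repeat split; lra.
Qed.

Section Contracting.
Context {K : R} {A : X -> Prop}.
Hypothesis HK : 0 < K.
Hypothesis HA : contracting d K A.

Notation f := (dist_set d A).

Lemma proj_exists z : exists a, proj d A z a.
Proof. apply HA. Qed.

Lemma dist_set_nonneg z : 0 <= f z.
Proof.
  destruct (proj_exists z) as [a Ha]. rewrite <- (proj_dist _ _ _ Ha). apply dist_nonneg.
Qed.

Lemma proj_close x y a b : d x y <= f x - K -> proj d A x a -> proj d A y b -> d a b <= K.
Proof.
  intros Hxy Ha Hb. apply (dist_le_of_diam_le _ _ _ _ (proj2 HA x y Hxy)); [left | right]; auto.
Qed.

Lemma dist_set_sub_le_of_proj_far x y a b : proj d A x a -> proj d A y b -> K < d a b ->
  f x - K <= d x y.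
Proof.
  intros Ha Hb Hab. apply Rnot_lt_le. intros Hxy.
  pose proof (proj_close x y a b ltac:(lra) Ha Hb). lra.
Qed.

Lemma dist_ge_of_proj_far x y a b : proj d A x a -> proj d A y b -> 2 * K < d a b ->
  f x + f y - 2 * K <= d x y.
Proof.
  intros Ha Hb Hab. apply Rnot_lt_le. intros Hxy.
  pose proof (dist_set_sub_le_of_proj_far x y a b Ha Hb ltac:(lra)) as Hx.
  pose proof (dist_set_sub_le_of_proj_far y x b a Hb Ha ltac:(rewrite dist_sym; lra)) as Hy.
  rewrite dist_sym in Hy.
  destruct (geodesic_point x y (f x - K)) as (z & Hxz & Hzy); [lra|].
  destruct (proj_exists z) as [c Hc].
  assert (Hac : d a c <= K) by (apply (proj_close x z); auto; lra).
  assert (Hbc : d b c <= K) by (apply (proj_close y z); auto; rewrite dist_sym; lra).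
  pose proof (dist_triangle a c b). rewrite (dist_sym c b) in *. lra.
Qed.

Lemma proj_coarse_lipschitz x y a b : proj d A x a -> proj d A y b ->
  d a b <= 2 * d x y + 2 * K.
Proof.
  intros Ha Hb. destruct (Rle_lt_dec (d a b) (2 * K)) as [H|H].
  { pose proof (dist_nonneg x y). lra. }
  pose proof (dist_ge_of_proj_far x y a b Ha Hb H).
  pose proof (dist_triangle a x b). pose proof (dist_triangle x y b).
  rewrite (dist_sym a x), (proj_dist _ _ _ Ha), (proj_dist _ _ _ Hb) in *. lra.
Qed.

Lemma proj_close_of_dist_le x z a : proj d A x a -> d x z <= Rmax 0 (f x - K) ->
  exists c, proj d A z c /\ d a c <= K.
Proof.
  intros Ha Hxz. unfold Rmax in Hxz. destruct (Rle_dec 0 (f x - K)).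
  - destruct (proj_exists z) as [c Hc]. exists c. split; [auto|].
    apply (proj_close x z); auto.
  - assert (x = z) as <- by (apply Hmet; pose proof (dist_nonneg x z); lra).
    exists a. rewrite dist_self. split; [auto | lra].
Qed.

Lemma dist_ge_of_proj_far_strong x y a b : proj d A x a -> proj d A y b -> 2 * K < d a b ->
  f x + f y + d a b / 2 - 4 * K <= d x y.
Proof.
  intros Ha Hb Hab.
  set (s := Rmax 0 (f x - K)). set (t := Rmax 0 (f y - K)).
  assert (Hst : s + t <= d x y).
  { pose proof (dist_ge_of_proj_far x y a b Ha Hb Hab).
    pose proof (dist_set_sub_le_of_proj_far x y a b Ha Hb ltac:(lra)).
    pose proof (dist_set_sub_le_of_proj_far y x b a Hb Ha ltac:(rewrite dist_sym; lra)).
    pose proof (dist_nonneg x y). rewrite (dist_sym y x) in *.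
    unfold s, t, Rmax. destruct (Rle_dec 0 (f x - K)), (Rle_dec 0 (f y - K)); lra. }
  assert (Hs : 0 <= s /\ f x - K <= s) by (split; [apply Rmax_l | apply Rmax_r]).
  assert (Ht : 0 <= t /\ f y - K <= t) by (split; [apply Rmax_l | apply Rmax_r]).
  destruct (geodesic_points2 x y s (d x y - t)) as (z1 & z2 & Hxz1 & Hz12 & Hz2y); try lra.
  destruct (proj_close_of_dist_le x z1 a Ha ltac:(fold s; lra)) as (c1 & Hc1 & Hac1).
  destruct (proj_close_of_dist_le y z2 b Hb ltac:(fold t; rewrite dist_sym; lra))
    as (c2 & Hc2 & Hbc2).
  pose proof (proj_coarse_lipschitz z1 z2 c1 c2 Hc1 Hc2).
  pose proof (dist_triangle a c1 b). pose proof (dist_triangle c1 c2 b).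
  rewrite (dist_sym c2 b) in *. lra.
Qed.

End Contracting.

Definition proj_within (r : R) (A : X -> Prop) (t q : X) : Prop :=
  forall u, proj d A q u -> d u t <= r.

Lemma proj_within_le r r' A t q : r <= r' -> proj_within r A t q -> proj_within r' A t q.
Proof. intros Hr H u Hu. specialize (H u Hu). lra. Qed.

Lemma not_proj_within r A t q : ~ proj_within r A t q -> exists u, proj d A q u /\ r < d u t.
Proof.
  intros H. apply not_all_ex_not in H as [u Hu]. apply imply_to_and in Hu as [Hu Hut].
  exists u. split; [auto | apply Rnot_le_lt; auto].
Qed.

Lemma proj_within_pointed_diam_lt r (D : R) A t q : 0 <= r -> 2 * r < D ->
  proj_within r A t q -> Rbar_lt (diam d (setU (set1 t) (proj d A q))) D.
Proof. intros Hr HD H. apply (pointed_diam_lt _ _ r); auto. Qed.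

Lemma proj_within_of_pointed_diam_lt (D : R) A t q :
  Rbar_lt (diam d (setU (set1 t) (proj d A q))) D -> proj_within D A t q.
Proof. intros H u Hu. apply Rlt_le, (dist_lt_of_pointed_diam_lt _ _ _ _ H Hu). Qed.

Lemma init_in_image (k : path X) : wf_path k -> image k (init k).
Proof. intros [Hab Hdisc]. exists (p_a k). repeat split; [lra | lra | apply Hdisc]. Qed.

Lemma quasigeodesic_dist_endpoints_gt K M (k : path X) : 0 < K -> wf_path k ->
  quasigeodesic d K k -> K * (M + K) < dom_length k -> M < d (init k) (term k).
Proof.
  intros HK [Hab Hdisc] Hq Hlen.
  assert (Ha : pdom k (p_a k)) by (repeat split; [lra | lra | apply Hdisc]).
  assert (Hb : pdom k (p_b k)) by (repeat split; [lra | lra | apply Hdisc]).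
  destruct (Hq _ _ Ha Hb) as [H _]. unfold dom_length in Hlen.
  rewrite Rabs_left1 in H by lra.
  assert (Ht : - (p_a k - p_b k) / K * K = p_b k - p_a k) by (field; lra).
  unfold init, term. nra.
Qed.

Lemma aligned_proj_within_term C (k e : path X) q :
  aligned d C k e -> image e q -> proj_within C (image k) (term k) q.
Proof.
  intros [H _] Hq u Hu. apply Rlt_le, (dist_lt_of_pointed_diam_lt _ _ _ _ H). exists q; auto.
Qed.

Lemma aligned_proj_within_init C (k e : path X) q :
  aligned d C k e -> image k q -> proj_within C (image e) (init e) q.
Proof.
  intros [_ H] Hq u Hu. apply Rlt_le, (dist_lt_of_pointed_diam_lt _ _ _ _ H). exists q; auto.
Qed.

Section Alignment.
Context {K C : R} {k e : path X}.
Hypothesis HK : 0 < K.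
Hypothesis HC : 0 < C.
Hypothesis Hk : contracting d K (image k).
Hypothesis He : contracting d K (image e).
Hypothesis Hal : aligned d C k e.

Lemma aligned_proj_within_term_or_init q : wf_path e ->
  proj_within (8 * K + 3 * C) (image k) (term k) q \/
  proj_within (2 * K + C) (image e) (init e) q.
Proof.
  intros Hwe.
  destruct (classic (proj_within (8 * K + 3 * C) (image k) (term k) q)) as [H|Hfar];
    [left; exact H | right].
  destruct (not_proj_within _ _ _ _ Hfar) as (u & Hu & Hut).
  intros v Hv. apply Rnot_lt_le. intros Hvi.
  destruct (proj_exists Hk v) as [w Hw].
  destruct (proj_exists He u) as [u' Hu'].
  destruct (proj_exists Hk (init e)) as [w' Hw'].
  pose proof (aligned_proj_within_term C k e v Hal (proj_mem _ _ _ Hv) w Hw).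
  pose proof (aligned_proj_within_init C k e u Hal (proj_mem _ _ _ Hu) u' Hu').
  pose proof (aligned_proj_within_term C k e _ Hal (init_in_image e Hwe) w' Hw').
  assert (Hw'u : d (init e) w' <= d (init e) u)
    by (apply proj_iff in Hw'; apply Hw', (proj_mem _ _ _ Hu)).
  (* Bounded geodesic image on both axes yields [d u u' <= 4K]; so [u] is near [init e],
     which projects near [term k]. *)
  pose proof (dist_triangle u w (term k)). pose proof (dist_triangle v u' (init e)).
  pose proof (dist_ge_of_proj_far HK Hk q v u w Hu Hw ltac:(lra)) as Hk_far.
  pose proof (dist_ge_of_proj_far HK He q u v u' Hv Hu' ltac:(lra)) as He_far.
  rewrite <- (proj_dist _ _ _ Hu), <- (proj_dist _ _ _ Hw), <- (proj_dist _ _ _ Hv),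
    <- (proj_dist _ _ _ Hu') in *.
  pose proof (dist_nonneg v w).
  pose proof (dist_triangle u (init e) (term k)). pose proof (dist_triangle (init e) w' (term k)).
  pose proof (dist_triangle u u' (init e)). rewrite (dist_sym (init e) u) in *.
  lra.
Qed.

Lemma aligned_dist_set_next_le p :
  ~ proj_within (8 * K + 3 * C) (image e) (init e) p ->
  dist_set d (image e) p + C <= dist_set d (image k) p.
Proof.
  intros Hfar. destruct (not_proj_within _ _ _ _ Hfar) as (u & Hu & Hui).
  destruct (proj_exists Hk p) as [w Hw]. destruct (proj_exists He w) as [b Hb].
  pose proof (aligned_proj_within_init C k e w Hal (proj_mem _ _ _ Hw) b Hb).
  pose proof (dist_triangle u b (init e)).
  pose proof (dist_ge_of_proj_far_strong HK He p w u b Hu Hb ltac:(lra)).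
  pose proof (dist_set_nonneg He w). rewrite <- (proj_dist _ _ _ Hw). lra.
Qed.

Lemma aligned_dist_set_prev_le p :
  ~ proj_within (8 * K + 3 * C) (image k) (term k) p ->
  dist_set d (image k) p + C <= dist_set d (image e) p.
Proof.
  intros Hfar. destruct (not_proj_within _ _ _ _ Hfar) as (u & Hu & Hut).
  destruct (proj_exists He p) as [w Hw]. destruct (proj_exists Hk w) as [b Hb].
  pose proof (aligned_proj_within_term C k e w Hal (proj_mem _ _ _ Hw) b Hb).
  pose proof (dist_triangle u b (term k)).
  pose proof (dist_ge_of_proj_far_strong HK Hk p w u b Hu Hb ltac:(lra)).
  pose proof (dist_set_nonneg Hk w). rewrite <- (proj_dist _ _ _ Hw). lra.
Qed.

End Alignment.

(** [near_radius] is the bound of [aligned_proj_within_term_or_init]; [length_const] is chosen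
    so that, by [quasigeodesic_dist_endpoints_gt], every axis has endpoints more than
    [2 * aligned_const] apart. *)
Definition near_radius (K C : R) : R := 8 * K + 3 * C.
Definition aligned_const (K C : R) : R := 2 * near_radius K C + 1.
Definition length_const (K C : R) : R := K * (2 * aligned_const K C + K).

Section AlignedSequence.
Variables K C : R.
Hypothesis HK : 0 < K.
Hypothesis HC : 0 < C.

Local Notation r := (near_radius K C).
Local Notation D := (aligned_const K C).

Variable J : Z -> Prop.
Variable kap : Z -> path X.
Hypothesis HJ : consecutive_Z J.
Hypothesis Hcontr : forall i, J i -> contracting d K (image (kap i)).
Hypothesis Hwf : forall i, J i -> wf_path (kap i).
Hypothesis Hlong : forall i, J i -> 2 * D < d (init (kap i)) (term (kap i)).
Hypothesis Hal : forall i, J i -> J (i + 1)%Z -> aligned d C (kap i) (kap (i + 1)%Z).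

Lemma near_radius_bounds : 0 <= r /\ C <= r /\ 2 * K + C <= r /\ 2 * r < D.
Proof. unfold aligned_const, near_radius. lra. Qed.

Lemma axis_not_near_both q i s : J i -> s <= D ->
  ~ (proj_within s (image (kap i)) (term (kap i)) q /\
     proj_within s (image (kap i)) (init (kap i)) q).
Proof.
  intros Hi Hs [Ht Hi0]. destruct (proj_exists (Hcontr i Hi) q) as [u Hu].
  pose proof (Ht u Hu). pose proof (Hi0 u Hu). pose proof (Hlong i Hi).
  pose proof (dist_triangle (init (kap i)) u (term (kap i))).
  rewrite (dist_sym (init (kap i)) u) in *. lra.
Qed.

Lemma axis_near_switch q i : J i -> J (i + 1)%Z ->
  proj_within r (image (kap i)) (term (kap i)) q \/
  proj_within r (image (kap (i + 1))) (init (kap (i + 1))) q.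
Proof.
  intros Hi Hi1. pose proof near_radius_bounds as Hr.
  destruct (aligned_proj_within_term_or_init HK HC (Hcontr i Hi) (Hcontr _ Hi1) (Hal i Hi Hi1) q
    (Hwf _ Hi1)) as [H|H]; [left; exact H | right].
  apply (proj_within_le (2 * K + C)); [lra | exact H].
Qed.

Lemma axis_near_excl q i : J i ->
  ~ (proj_within r (image (kap i)) (term (kap i)) q /\
     proj_within r (image (kap i)) (init (kap i)) q).
Proof. intros Hi. pose proof near_radius_bounds as Hr. apply axis_not_near_both; [auto | lra]. Qed.

Lemma aligned_later_axes l m : J l -> J m -> (l < m)%Z -> aligned d D (kap l) (kap m).
Proof.
  intros Hl Hm Hlm. pose proof near_radius_bounds as Hr.
  split; apply (pointed_diam_lt _ _ r); try lra; intros w (z & Hz & Hw).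
  - assert (Hm1 : J (m - 1)%Z) by (apply (consecutive_between HJ l _ m); auto; lia).
    assert (Hal1 := Hal _ Hm1). replace (m - 1 + 1)%Z with m in Hal1 by lia.
    assert (Hnear : proj_within r (image (kap (m - 1)%Z)) (term (kap (m - 1)%Z)) z).
    { apply (proj_within_le C); [lra|]. exact (aligned_proj_within_term C _ _ z (Hal1 Hm) Hz). }
    exact (a_down_closed HJ (axis_near_excl z) (axis_near_switch z) _ Hm1 Hnear l
      ltac:(lia) Hl w Hw).
  - assert (Hl1 : J (l + 1)%Z) by (apply (consecutive_between HJ l _ m); auto; lia).
    assert (Hnear : proj_within r (image (kap (l + 1)%Z)) (init (kap (l + 1)%Z)) z).
    { apply (proj_within_le C); [lra|]. exact (aligned_proj_within_init C _ _ z (Hal l Hl Hl1) Hz). }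
    exact (b_up_closed HJ (axis_near_excl z) (axis_near_switch z) _ Hl1 Hnear m
      ltac:(lia) Hm w Hw).
Qed.

Section Point.
Variable p : X.

Lemma aligned_excl i : J i ->
  ~ (aligned_path_pt d D (kap i) p /\ aligned_pt_path d D p (kap i)).
Proof.
  intros Hi [Ht Hs]. apply (axis_not_near_both p i D Hi); [lra|].
  split; [exact (proj_within_of_pointed_diam_lt _ _ _ _ Ht)
        | exact (proj_within_of_pointed_diam_lt _ _ _ _ Hs)].
Qed.

Lemma aligned_switch i : J i -> J (i + 1)%Z ->
  aligned_path_pt d D (kap i) p \/ aligned_pt_path d D p (kap (i + 1)%Z).
Proof.
  intros Hi Hi1. pose proof near_radius_bounds as Hr.
  destruct (axis_near_switch p i Hi Hi1) as [H|H]; [left | right];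
    exact (proj_within_pointed_diam_lt r D _ _ _ ltac:(lra) ltac:(lra) H).
Qed.

Lemma dist_set_step_down i : J i -> J (i + 1)%Z -> ~ aligned_pt_path d D p (kap (i + 1)%Z) ->
  dist_set d (image (kap (i + 1))) p + C <= dist_set d (image (kap i)) p.
Proof.
  intros Hi Hi1 Hfar. pose proof near_radius_bounds as Hr.
  apply (aligned_dist_set_next_le HK HC (Hcontr i Hi) (Hcontr _ Hi1) (Hal i Hi Hi1)).
  intros Hnear. apply Hfar. exact (proj_within_pointed_diam_lt r D _ _ _ ltac:(lra) ltac:(lra) Hnear).
Qed.

Lemma dist_set_step_up i : J i -> J (i + 1)%Z -> ~ aligned_path_pt d D (kap i) p ->
  dist_set d (image (kap i)) p + C <= dist_set d (image (kap (i + 1))) p.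
Proof.
  intros Hi Hi1 Hfar. pose proof near_radius_bounds as Hr.
  apply (aligned_dist_set_prev_le HK HC (Hcontr i Hi) (Hcontr _ Hi1) (Hal i Hi Hi1)).
  intros Hnear. apply Hfar. exact (proj_within_pointed_diam_lt r D _ _ _ ltac:(lra) ltac:(lra) Hnear).
Qed.

Lemma aligned_sequence_properties :
  let J0 := fun j => J j /\
     (forall i, J i -> (i < j)%Z -> aligned_path_pt d D (kap i) p) /\
     (forall i, J i -> (j < i)%Z -> aligned_pt_path d D p (kap i)) in
  let U := fun z => exists i, J i /\ image (kap i) z in
  (forall i, J i -> ~ (aligned_path_pt d D (kap i) p /\ aligned_pt_path d D p (kap i))) /\
  ((exists j, forall k, J0 k <-> k = j) \/
   (exists j, forall k, J0 k <-> (k = j \/ k = (j + 1)%Z))) /\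
  ((exists a, proj d U p a) /\
   (forall a, proj d U p a -> exists j, J0 j /\ proj d (image (kap j)) p a)) /\
  (forall l m, J l -> J m -> (l < m)%Z -> aligned d D (kap l) (kap m)).
Proof.
  intros J0 U.
  assert (Hf : forall i, J i -> 0 <= dist_set d (image (kap i)) p)
    by (intros i Hi; apply (dist_set_nonneg (Hcontr i Hi))).
  assert (Hproj : forall i, J i -> exists w, proj d (image (kap i)) p w)
    by (intros i Hi; apply (proj_exists (Hcontr i Hi))).
  split; [exact aligned_excl|split; [|split; [split|]]].
  - exact (separating_index_shape HJ aligned_excl
      (separating_index_exists HJ aligned_excl aligned_switch HC Hf dist_set_step_down dist_set_step_up)).
  - destruct (minimum_exists HJ aligned_excl aligned_switch HC Hf dist_set_step_down dist_set_step_up)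
      as (m & Hm & Hmin).
    destruct (Hproj m Hm) as [w Hw]. exists w. exact (proj_union_of_min J _ p m w Hm Hw Hmin).
  - intros a Ha. destruct (proj_union_inv J _ p a Hproj Ha) as (j & Hj & Haj & Hmin).
    exists j. split; [|exact Haj].
    exact (separating_index_of_minimum HJ aligned_excl aligned_switch HC dist_set_step_down
      dist_set_step_up j Hj Hmin).
  - exact aligned_later_axes.
Qed.

End Point.
End AlignedSequence.
End Geodesic.

Theorem proposition3p5 (X : Type) (d : X -> X -> R)
  (Hmet : is_metric d) (Hgeo : is_geodesic d) :
  forall C K : R, 0 < C -> 1 < K ->
  exists D L : R, C < D /\ C < L /\
  forall (J : Z -> Prop) (p : X) (kap : Z -> path X) (x y : Z -> X),
    consecutive_Z J ->
    (forall i, J i -> contracting_axis d K (kap i) (x i) (y i) /\ L < dom_length (kap i)) ->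
    (forall i, J i -> J (i + 1)%Z -> aligned d C (kap i) (kap (i + 1)%Z)) ->
    let J0 := fun j => J j /\
       (forall i, J i -> (i < j)%Z -> aligned_path_pt d D (kap i) p) /\
       (forall i, J i -> (j < i)%Z -> aligned_pt_path d D p (kap i)) in
    let U := fun z => exists i, J i /\ image (kap i) z in
    (* (1) *)
    (forall i, J i -> ~ (aligned_path_pt d D (kap i) p /\ aligned_pt_path d D p (kap i))) /\
    (* (2) *)
    ((exists j, forall k, J0 k <-> k = j) \/
     (exists j, forall k, J0 k <-> (k = j \/ k = (j + 1)%Z))) /\
    (* (3) *)
    ((exists a, proj d U p a) /\
     (forall a, proj d U p a -> exists j, J0 j /\ proj d (image (kap j)) p a)) /\
    (* (4) *)
    (forall l m, J l -> J m -> (l < m)%Z -> aligned d D (kap l) (kap m)).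
Proof.
  intros C K HC HK. exists (aligned_const K C), (length_const K C).
  split; [|split].
  - unfold aligned_const, near_radius. lra.
  - unfold length_const, aligned_const, near_radius. nra.
  - intros J p kap x y HJ Hax Hal.
    apply (aligned_sequence_properties d Hmet Hgeo K C ltac:(lra) HC J kap HJ); [..|exact Hal];
      intros i Hi; destruct (Hax i Hi) as [(Hwf & _ & _ & Hq & Hcontr) Hlen].
    + exact Hcontr.
    + exact Hwf.
    + exact (quasigeodesic_dist_endpoints_gt d K _ _ ltac:(lra) Hwf Hq Hlen).
Qed.
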